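(* Let $\varepsilon\ge0$ and $\phi:\mathcal{B}\to\mathcal{C}\subseteq\mathcal{B}$ satisfy $\|\phi(b)-b\|_1\le\varepsilon$ for all $b\in\mathcal{B}$. Let $\pi:\mathcal{B}\to\Delta(\mathcal{A})$ satisfy $\|\pi(b_1)-\pi(b_2)\|_1\le L_\pi\|b_1-b_2\|_1$ for all $b_1,b_2\in\mathcal{B}$, and let $[\pi_\phi]_{\rm true}(b):=\pi(\phi(b))$. Then $$\big\|V^\pi_{\rm true}-V^{[\pi_\phi]_{\rm true}}_{\rm true}\big\|_\infty\le\frac{R_{\max}L_\pi\varepsilon}{1-\gamma}+\frac{\gamma R_{\max}L_\pi\varepsilon}{(1-\gamma)^2}.$$
   Context: Finite POMDP with finite $\mathcal{S},\mathcal{A},\mathcal{O}$, transition $\mathbb{T}$, emission $\mathbb{O}$, reward $r:\mathcal{S}\times\mathcal{A}\to[0,R_{\max}]$, discount $\gamma\in[0,1)$. $P(o\mid b,a)=\sum_{s,s'}b(s)\mathbb{T}(s'\mid s,a)\mathbb{O}(o\mid s')$ and $b^{o,a}(s')\propto\sum_s b(s)\mathbb{T}(s'\mid s,a)\mathbb{O}(o\mid s')$. $\mathcal{B}\subseteq\Delta(\mathcal{S})$ is the set of reachable beliefs. The belief MDP has reward $r(b,a)=\sum_s b(s)r(s,a)$ and transitions $b\mapsto b^{o,a}$ w.p. $P(o\mid b,a)$; for a belief policy $\pi$, $V^\pi_{\rm true}(b)=\mathbb{E}[\sum_{t\ge0}\gamma^t r(b_t,a_t)\mid b_0=b]$, $a_t\sim\pi(b_t)$.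 *)

From HB Require Import structures.
From mathcomp Require Import all_boot all_order all_algebra.
From mathcomp Require Import all_classical all_reals all_analysis.
Set Implicit Arguments. Unset Strict Implicit. Unset Printing Implicit Defensive.
Import Order.TTheory GRing.Theory Num.Theory numFieldNormedType.Exports.
Local Open Scope ring_scope.

Section POMDP.
Variables (R : realType) (S A O : finType).
(* transition T s a s' = T(s'|s,a); emission Em s' o = O(o|s') *)
Variables (T : S -> A -> S -> R) (Em : S -> O -> R) (r : S -> A -> R) (gamma : R).

Definition is_dist (X : finType) (p : {ffun X -> R}) : Prop :=
  (forall x, 0 <= p x) /\ \sum_x p x = 1.

Definition l1dist (X : finType) (p q : {ffun X -> R}) : R :=
  \sum_x `|p x - q x|.

Definition Pobs (b : {ffun S -> R}) (a : A) (o : O) : R :=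
  \sum_s \sum_s' b s * T s a s' * Em s' o.

(* belief update b^{o,a} (normalized; irrelevant when Pobs b a o = 0) *)
Definition bupd (b : {ffun S -> R}) (a : A) (o : O) : {ffun S -> R} :=
  [ffun s' => (\sum_s b s * T s a s' * Em s' o) / Pobs b a o].

Definition rb (b : {ffun S -> R}) (a : A) : R := \sum_s b s * r s a.

Inductive reachable (b0 : {ffun S -> R}) : {ffun S -> R} -> Prop :=
| reach0 : reachable b0 b0
| reachS b a o : reachable b0 b -> 0 < Pobs b a o -> reachable b0 (bupd b a o).

(* n-step expected discounted return E[sum_{t<n} gamma^t r(b_t,a_t) | b_0 = b]
   of the belief policy pi, computed by unfolding the expectation *)
Fixpoint Vn (pi : {ffun S -> R} -> {ffun A -> R}) (n : nat) (b : {ffun S -> R}) : R :=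
  match n with
  | 0 => 0
  | n.+1 => \sum_a pi b a *
              (rb b a + gamma * \sum_o Pobs b a o * Vn pi n (bupd b a o))
  end.

Definition Vtrue (pi : {ffun S -> R} -> {ffun A -> R}) (b : {ffun S -> R}) : R :=
  limn (fun n => Vn pi n b).

End POMDP.

From HB Require Import structures.
From mathcomp Require Import all_boot all_order all_algebra.
From mathcomp Require Import all_classical all_reals all_analysis.
From mathcomp Require Import ring.
Set Implicit Arguments. Unset Strict Implicit. Unset Printing Implicit Defensive.
Import Order.TTheory GRing.Theory Num.Theory numFieldNormedType.Exports.
Local Open Scope ring_scope.

(* Write [Q^pol_n(b, a) = r(b, a) + gamma * E_o[V^pol_n(b^{o,a})]], so that
   [V^pol_(n+1)(b) = E_(a ~ pol b)[Q^pol_n(b, a)]]. For two policies pol1, pol2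
   whose action distributions are delta-close in L1 on every reachable belief,
   [V^pol1_(n+1)(b) - V^pol2_(n+1)(b)] splits into
   [sum_a (pol1 b a - pol2 b a) Q^pol1_n(b, a)], at most [delta Rmax / (1 - gamma)]
   since [0 <= Q <= Rmax / (1 - gamma)], plus [E_(a ~ pol2 b)[Q^pol1_n - Q^pol2_n]],
   at most gamma times the previous bound. Induction gives
   [|V^pol1_n - V^pol2_n| <= delta Rmax / (1 - gamma)^2], which survives the limit
   because [V_n] is nondecreasing and bounded. For pol2 = pi o phi, Lipschitzness
   of pi gives delta = Lpi eps, and
   [1 / (1 - gamma) + gamma / (1 - gamma)^2 = 1 / (1 - gamma)^2]. *)

Lemma lim_normB_le (R : realType) (u v : R^nat) (c : R) :
  cvgn u -> cvgn v -> (forall n, `|u n - v n| <= c) -> `|limn u - limn v| <= c.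
Proof.
move=> cu cv huv; rewrite -limB // -lim_norm; last exact: is_cvgB.
apply: limr_le; first by apply: is_cvg_norm; exact: is_cvgB.
exact: nearW.
Qed.

Section Average.
Variables (R : realType) (X : finType) (p : X -> R).
Hypotheses (p_ge0 : forall x, 0 <= p x) (p_sum1 : \sum_x p x = 1).

Lemma avg_le_supp (f g : X -> R) : (forall x, 0 < p x -> f x <= g x) ->
  \sum_x p x * f x <= \sum_x p x * g x.
Proof.
move=> fg; apply: ler_sum => x _.
have := p_ge0 x; rewrite le_eqVlt => /predU1P[<-|px_gt0]; first by rewrite !mul0r.
by rewrite ler_wpM2l ?p_ge0 ?fg.
Qed.

Lemma avg_const (c : R) : \sum_x p x * c = c.
Proof. by rewrite -mulr_suml p_sum1 mul1r. Qed.

Lemma avg_itv (f : X -> R) (m M : R) : (forall x, 0 < p x -> m <= f x <= M) ->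
  m <= \sum_x p x * f x <= M.
Proof.
move=> hf; apply/andP; split.
  by rewrite -(avg_const m); apply: avg_le_supp => x /hf /andP[].
by rewrite -(avg_const M); apply: avg_le_supp => x /hf /andP[].
Qed.

Lemma avg_distB (f g : X -> R) (D : R) : (forall x, 0 < p x -> `|f x - g x| <= D) ->
  `|\sum_x p x * f x - \sum_x p x * g x| <= D.
Proof.
move=> hfg; rewrite -sumrB; apply: le_trans (ler_norm_sum _ _ _) _.
under eq_bigr => x _ do rewrite -mulrBr normrM (ger0_norm (p_ge0 x)).
by rewrite -(avg_const D); apply: avg_le_supp => x /hfg.
Qed.

End Average.

Lemma avg_l1dist (R : realType) (X : finType) (p q : {ffun X -> R}) (f : X -> R) M :
  (forall x, `|f x| <= M) ->
  `|\sum_x p x * f x - \sum_x q x * f x| <= l1dist p q * M.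
Proof.
move=> hf; rewrite -sumrB; apply: le_trans (ler_norm_sum _ _ _) _.
by rewrite mulr_suml; apply: ler_sum => x _; rewrite -mulrBl normrM ler_wpM2l.
Qed.

Lemma l1distC (R : realType) (X : finType) (p q : {ffun X -> R}) :
  l1dist p q = l1dist q p.
Proof. by apply: eq_bigr => x _; rewrite distrC. Qed.

Lemma l1dist_ge0 (R : realType) (X : finType) (p q : {ffun X -> R}) : 0 <= l1dist p q.
Proof. exact: sumr_ge0. Qed.

Lemma is_dist_fun (R : realType) (X : finType) (f : X -> R) :
  is_dist [ffun x => f x] -> (forall x, 0 <= f x) /\ \sum_x f x = 1.
Proof.
case=> f_ge0 f_sum1; split=> [x|]; first by have := f_ge0 x; rewrite ffunE.
by rewrite -f_sum1; apply: eq_bigr => x _; rewrite ffunE.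
Qed.

Lemma is_dist_inhabited (R : realType) (X : finType) (p : {ffun X -> R}) :
  is_dist p -> inhabited X.
Proof.
case=> _; case: (pickP (@predT X)) => [x _ _|X_empty]; first exact: inhabits x.
by rewrite big_pred0 // => /esym/eqP; rewrite oner_eq0.
Qed.

Section BeliefMDP.
Variables (R : realType) (S A O : finType).
Variables (T : S -> A -> S -> R) (Em : S -> O -> R) (r : S -> A -> R).
Variables (Rmax gamma : R) (b0 : {ffun S -> R}).
Hypothesis T_dist : forall s a, is_dist [ffun s' => T s a s'].
Hypothesis Em_dist : forall s', is_dist [ffun o => Em s' o].
Hypothesis r_itv : forall s a, 0 <= r s a <= Rmax.
Hypotheses (gamma_ge0 : 0 <= gamma) (gamma_lt1 : gamma < 1).
Hypothesis b0_dist : is_dist b0.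

Local Notation Pobs := (Pobs T Em).
Local Notation bupd := (bupd T Em).
Local Notation reachable := (reachable T Em b0).
Local Notation V := (Vn T Em r gamma).

Lemma T_ge0 s a s' : 0 <= T s a s'.
Proof. by case: (is_dist_fun (T_dist s a)). Qed.

Lemma T_sum1 s a : \sum_s' T s a s' = 1.
Proof. by case: (is_dist_fun (T_dist s a)). Qed.

Lemma Em_ge0 s' o : 0 <= Em s' o.
Proof. by case: (is_dist_fun (Em_dist s')). Qed.

Lemma Em_sum1 s' : \sum_o Em s' o = 1.
Proof. by case: (is_dist_fun (Em_dist s')). Qed.

Lemma Pobs_ge0 (b : {ffun S -> R}) a o : (forall s, 0 <= b s) -> 0 <= Pobs b a o.
Proof.
move=> b_ge0; do 2!apply: sumr_ge0 => ? _.
by rewrite !mulr_ge0 ?b_ge0 ?T_ge0 ?Em_ge0.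
Qed.

Lemma Pobs_sum1 (b : {ffun S -> R}) a : \sum_s b s = 1 -> \sum_o Pobs b a o = 1.
Proof.
move=> b_sum1; rewrite /Pobs exchange_big -b_sum1; apply: eq_bigr => s _.
rewrite exchange_big -[RHS]mulr1 -(T_sum1 s a) mulr_sumr; apply: eq_bigr => s' _.
by rewrite -[RHS]mulr1 -(Em_sum1 s') !mulr_sumr.
Qed.

Lemma is_dist_bupd b a o : is_dist b -> 0 < Pobs b a o -> is_dist (bupd b a o).
Proof.
case=> b_ge0 _ Pobs_gt0; split=> [s'|].
  rewrite ffunE divr_ge0 ?(ltW Pobs_gt0) //; apply: sumr_ge0 => s _.
  by rewrite !mulr_ge0 ?b_ge0 ?T_ge0 ?Em_ge0.
under eq_bigr do rewrite ffunE.
by rewrite -mulr_suml /Pobs exchange_big divff ?gt_eqF.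
Qed.

Lemma reachable_dist b : reachable b -> is_dist b.
Proof. by elim=> // {}b a o _ b_dist; apply: is_dist_bupd. Qed.

Lemma Rmax_ge0 : inhabited A -> 0 <= Rmax.
Proof.
case=> a; case: (is_dist_inhabited b0_dist) => s.
by case/andP: (r_itv s a); apply: le_trans.
Qed.

Definition Qn (pol : {ffun S -> R} -> {ffun A -> R}) n b a : R :=
  rb r b a + gamma * \sum_o Pobs b a o * V pol n (bupd b a o).

Lemma VnS pol n b : V pol n.+1 b = \sum_a pol b a * Qn pol n b a.
Proof. by []. Qed.

Local Notation vmax := (Rmax / (1 - gamma)).

Lemma vmax_fix : Rmax + gamma * vmax = vmax.
Proof. by field; rewrite subr_eq0 gt_eqF. Qed.

Section Policy.
Variable pol : {ffun S -> R} -> {ffun A -> R}.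
Hypothesis pol_dist : forall b, reachable b -> is_dist (pol b).

Lemma vmax_ge0 : 0 <= vmax.
Proof.
have A_inhabited := is_dist_inhabited (pol_dist (reach0 T Em b0)).
by rewrite divr_ge0 ?Rmax_ge0 // subr_ge0 ltW.
Qed.

Lemma Qn_itv n b a : is_dist b ->
  (forall o, 0 < Pobs b a o -> 0 <= V pol n (bupd b a o) <= vmax) ->
  0 <= Qn pol n b a <= vmax.
Proof.
case=> b_ge0 b_sum1 V_itv.
have /andP[rb_ge0 rb_le] : 0 <= rb r b a <= Rmax by apply: avg_itv.
have /andP[EV_ge0 EV_le] := avg_itv (Pobs_ge0 a ^~ b_ge0) (Pobs_sum1 a b_sum1) V_itv.
by rewrite addr_ge0 ?mulr_ge0 //= -vmax_fix lerD ?ler_wpM2l.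
Qed.

Lemma Vn_itv n b : reachable b -> 0 <= V pol n b <= vmax.
Proof.
elim: n b => [|n IHn] b b_reach; first by rewrite lexx vmax_ge0.
case: (pol_dist b_reach) => pol_ge0 pol_sum1.
apply: avg_itv => // a _; apply: Qn_itv; first exact: reachable_dist.
by move=> o Pobs_gt0; apply/IHn/reachS.
Qed.

Lemma Qn_norm_le n b a : reachable b -> `|Qn pol n b a| <= vmax.
Proof.
move=> b_reach; have /andP[Q_ge0 Q_le] : 0 <= Qn pol n b a <= vmax.
  apply: Qn_itv; first exact: reachable_dist.
  by move=> o Pobs_gt0; apply/Vn_itv/reachS.
by rewrite ger0_norm.
Qed.

Lemma Vn_le_succ n b : reachable b -> V pol n b <= V pol n.+1 b.
Proof.
elim: n b => [|n IHn] b b_reach; first by have /andP[] := Vn_itv 1 b_reach.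
have [b_ge0 _] := reachable_dist b_reach.
case: (pol_dist b_reach) => pol_ge0 _.
rewrite !VnS; apply: ler_sum => a _; rewrite ler_wpM2l // lerD2l ler_wpM2l //.
by apply: avg_le_supp => [x|o Pobs_gt0]; [exact: Pobs_ge0 | exact/IHn/reachS].
Qed.

Lemma Vn_cvg b : reachable b -> cvgn (V pol ^~ b).
Proof.
move=> b_reach; apply: nondecreasing_is_cvgn.
  by apply/nondecreasing_seqP => n; apply: Vn_le_succ.
by exists vmax => _ [n _ <-]; have /andP[] := Vn_itv n b_reach.
Qed.

End Policy.

Section PolicyPerturbation.
Variables (pol1 pol2 : {ffun S -> R} -> {ffun A -> R}) (delta : R).
Hypothesis pol1_dist : forall b, reachable b -> is_dist (pol1 b).
Hypothesis pol2_dist : forall b, reachable b -> is_dist (pol2 b).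
Hypothesis pol12_close : forall b, reachable b -> l1dist (pol1 b) (pol2 b) <= delta.

Local Notation bound := (delta * Rmax / (1 - gamma) ^+ 2).

Lemma Vn_perturb n b : reachable b -> `|V pol1 n b - V pol2 n b| <= bound.
Proof.
have bound_fix : delta * vmax + gamma * bound = bound.
  by field; rewrite subr_eq0 gt_eqF.
elim: n b => [|n IHn] b b_reach.
  have delta_ge0 := le_trans (l1dist_ge0 _ _) (pol12_close (reach0 T Em b0)).
  have Rmax_nneg := Rmax_ge0 (is_dist_inhabited (pol1_dist (reach0 T Em b0))).
  by rewrite /= subrr normr0 divr_ge0 ?mulr_ge0 ?exprn_ge0 // subr_ge0 ltW.
have [b_ge0 b_sum1] := reachable_dist b_reach.
have [pol2_ge0 pol2_sum1] := pol2_dist b_reach.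
rewrite !VnS -(subrK (\sum_a pol2 b a * Qn pol1 n b a) (\sum_a _ * _)) -addrA.
rewrite -bound_fix; apply: le_trans (ler_normD _ _) _; apply: lerD.
  apply: le_trans (avg_l1dist _ _ (fun a => Qn_norm_le pol1_dist n a b_reach)) _.
  by rewrite ler_wpM2r ?(vmax_ge0 pol1_dist) ?pol12_close.
apply: avg_distB => // a _.
rewrite /Qn opprD addrACA subrr add0r -mulrBr normrM ger0_norm // ler_wpM2l //.
apply: (avg_distB (Pobs_ge0 a ^~ b_ge0) (Pobs_sum1 a b_sum1)) => o Pobs_gt0.
exact/IHn/reachS.
Qed.

Lemma Vtrue_perturb b : reachable b ->
  `|Vtrue T Em r gamma pol1 b - Vtrue T Em r gamma pol2 b| <= bound.
Proof.
move=> b_reach; apply: lim_normB_le; try exact: Vn_cvg.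
by move=> n; apply: Vn_perturb.
Qed.

End PolicyPerturbation.

End BeliefMDP.

Theorem mainTheorem5 (R : realType) (S A O : finType)
  (T : S -> A -> S -> R) (Em : S -> O -> R) (r : S -> A -> R)
  (Rmax gamma : R) (b0 : {ffun S -> R})
  (phi : {ffun S -> R} -> {ffun S -> R})
  (pi : {ffun S -> R} -> {ffun A -> R})
  (eps Lpi : R) :
  (forall s a, is_dist [ffun s' => T s a s']) ->
  (forall s', is_dist [ffun o => Em s' o]) ->
  (forall s a, 0 <= r s a <= Rmax) ->
  0 <= gamma -> gamma < 1 ->
  is_dist b0 ->
  0 <= eps -> 0 <= Lpi ->
  (* phi : B -> C, with C a subset of B *)
  (forall b, reachable T Em b0 b -> reachable T Em b0 (phi b)) ->
  (forall b, reachable T Em b0 b -> l1dist (phi b) b <= eps) ->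
  (forall b, reachable T Em b0 b -> is_dist (pi b)) ->
  (forall b1 b2, reachable T Em b0 b1 -> reachable T Em b0 b2 ->
     l1dist (pi b1) (pi b2) <= Lpi * l1dist b1 b2) ->
  forall b, reachable T Em b0 b ->
    `| Vtrue T Em r gamma pi b - Vtrue T Em r gamma (fun b' => pi (phi b')) b |
      <= Rmax * Lpi * eps / (1 - gamma)
         + gamma * Rmax * Lpi * eps / (1 - gamma) ^+ 2.
Proof.
move=> T_dist Em_dist r_itv gamma_ge0 gamma_lt1 b0_dist _ Lpi_ge0
  phi_reach phi_close pi_dist pi_lipschitz b b_reach.
have pi_phi_close b' : reachable T Em b0 b' -> l1dist (pi b') (pi (phi b')) <= Lpi * eps.
  move=> b'_reach; apply: le_trans (pi_lipschitz _ _ b'_reach (phi_reach _ b'_reach)) _.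
  by rewrite ler_wpM2l // l1distC phi_close.
have -> : Rmax * Lpi * eps / (1 - gamma) + gamma * Rmax * Lpi * eps / (1 - gamma) ^+ 2
          = Lpi * eps * Rmax / (1 - gamma) ^+ 2.
  by field; rewrite subr_eq0 gt_eqF.
apply: (Vtrue_perturb T_dist Em_dist r_itv gamma_ge0 gamma_lt1 b0_dist) => //.
by move=> b' b'_reach; apply/pi_dist/phi_reach.
Qed.
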